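(* Let $\mathcal Z=\{z\in\{0,1\}^{V}: z_v z_{v'}=0 \text{ for all } v\in V,\ v'\in\mathcal A(v)\}$ and let $\mathrm{conv}(\mathcal Z)\subset\mathbb R^{V}$ be its convex hull. Then $$\mathrm{conv}(\mathcal Z)=\Big\{\gamma\in\mathbb R^V:\ \gamma_v=\kappa_v\prod_{v'\in\mathcal A(v)}(1-\kappa_{v'})\ \forall v\in V,\ \text{for some }\kappa\in[0,1]^{V}\Big\}=\Big\{\gamma\in[0,1]^{V}:\ \sum_{v'\in\bar{\mathcal A}(v)}\gamma_{v'}\le 1\ \ \forall v\in V\Big\}.$$
   Context: $G=(V,E)$ is a finite directed rooted tree with vertex set $V=\{1,\dots,|V|\}$ and root $1$, edges oriented from parent to child. For $v\in V$: $\mathcal A(v)$ is the set of strict ancestors of $v$, $\bar{\mathcal A}(v)=\mathcal A(v)\cup\{v\}$, $\mathcal D(v)$ is the set of strict descendants of $v$, $\bar{\mathcal D}(v)=\mathcal D(v)\cup\{v\}$, and $d(v)$ is the number of children of $v$. *)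

From HB Require Import structures.
From mathcomp Require Import all_boot all_order all_algebra.
Set Implicit Arguments. Unset Strict Implicit. Unset Printing Implicit Defensive.
Import Order.TTheory GRing.Theory Num.Theory.
Local Open Scope ring_scope.

(* A finite rooted tree on vertex type T is encoded by its parent map:
   the root is a fixed point of [parent], and every vertex reaches the root
   by iterating [parent].  The edges are (parent v, v) for v <> root. *)
Definition is_rooted_tree (T : finType) (root : T) (parent : T -> T) : Prop :=
  parent root = root /\ forall v : T, fconnect parent v root.

Definition ancb (T : finType) (parent : T -> T) (v : T) : {set T} :=
  [set u | fconnect parent v u].

Definition anc (T : finType) (parent : T -> T) (v : T) : {set T} :=
  ancb parent v :\ v.

Definition Zset (T : finType) (parent : T -> T) : pred {ffun T -> bool} :=
  fun z => [forall v, forall u, (u \in anc parent v) ==> ~~ (z v && z u)].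

Definition in_conv_Z (R : realFieldType) (T : finType) (parent : T -> T)
    (g : T -> R) : Prop :=
  exists lam : {ffun T -> bool} -> R,
    [/\ forall z, 0 <= lam z,
        forall z, ~~ Zset parent z -> lam z = 0,
        \sum_z lam z = 1
      & forall v, g v = \sum_z lam z * (z v)%:R].

Definition in_prod_form (R : realFieldType) (T : finType) (parent : T -> T)
    (g : T -> R) : Prop :=
  exists kappa : T -> R,
    (forall v, 0 <= kappa v <= 1) /\
    (forall v, g v = kappa v * \prod_(u in anc parent v) (1 - kappa u)).

Definition in_polytope (R : realFieldType) (T : finType) (parent : T -> T)
    (g : T -> R) : Prop :=
  (forall v, 0 <= g v <= 1) /\
  (forall v, \sum_(u in ancb parent v) g u <= 1).

(* Polytope to product form: along the path from the root, put
   [kappa_v := gamma_v / (1 - sum of gamma over the strict ancestors of v)];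
   the ancestor products then telescope to exactly that denominator.
   Product form to convex hull: draw independent bits [b_v] with
   [P(b_v = 1) = kappa_v] and keep a vertex iff its bit is set and no strict
   ancestor's bit is, which always gives a point of Z whose expectation is
   gamma.  Convex hull to polytope: every point of Z has at most one 1 on the
   chain of ancestors of a vertex, and the polytope is convex. *)
From HB Require Import structures.
From mathcomp Require Import all_boot all_order all_algebra.
Import Order.TTheory GRing.Theory Num.Theory.
Set Implicit Arguments. Unset Strict Implicit. Unset Printing Implicit Defensive.

Section Ancestors.
Variables (T : finType) (f : T -> T).

Lemma fconnect_fixpoint r u : f r = r -> fconnect f r u -> u = r.
Proof. by move=> fr /iter_findex <-; rewrite iter_fix. Qed.

Lemma fconnect_total v u w :
  fconnect f v u -> fconnect f v w -> fconnect f u w \/ fconnect f w u.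
Proof.
move=> /iter_findex <- /iter_findex <-.
case: (leqP (findex f v u) (findex f v w)) => [le_uw | /ltnW le_wu].
  by left; rewrite -(subnK le_uw) iterD; apply: fconnect_iter.
by right; rewrite -(subnK le_wu) iterD; apply: fconnect_iter.
Qed.

Lemma ancb_refl v : v \in ancb f v.
Proof. by rewrite inE connect0. Qed.

End Ancestors.

Section RootedTree.
Variables (T : finType) (root : T) (parent : T -> T).
Hypotheses (parent_root : parent root = root)
           (reach_root : forall v, fconnect parent v root).

(* [v] lies on a cycle of [parent] and reaches the fixed point [root], so
   going around the cycle often enough from [v] must land on [root]. *)
Lemma parent_fconnect_root v : fconnect parent (parent v) v -> v = root.
Proof.
move=> /iter_findex; set n := findex _ _ _ => cyc_v.
have iter_cyc k : iter (k * n.+1) parent v = v.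
  by elim: k => [|k IHk] //; rewrite mulSn iterD IHk iterSr.
have /iter_findex := reach_root v; set m := findex _ _ _ => to_root.
have le_m : m <= m * n.+1 by rewrite leq_pmulr.
by rewrite -(iter_cyc m) -(subnK le_m) iterD to_root iter_fix.
Qed.

Lemma anc_root : anc parent root = set0.
Proof.
apply/setP=> u; rewrite !inE.
by apply/andP=> -[u_neq /(fconnect_fixpoint parent_root) u_eq]; rewrite u_eq eqxx in u_neq.
Qed.

Lemma anc_parent v : v != root -> anc parent v = ancb parent (parent v).
Proof.
move=> v_neq; apply/setP=> u; rewrite !inE; apply/andP/idP.
  case=> u_neq /iter_findex; case: (findex parent v u) => [/= v_eq|k].
    by rewrite v_eq eqxx in u_neq.
  by rewrite iterSr => <-; apply: fconnect_iter.
move=> pv_u; split; last exact: connect_trans (fconnect1 parent v) pv_u.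
by apply: (contra_neq _ v_neq) => u_eq; apply: parent_fconnect_root; rewrite -{2}u_eq.
Qed.

Lemma tree_ind (P : T -> Prop) :
  P root -> (forall v, v != root -> P (parent v) -> P v) -> forall v, P v.
Proof.
move=> P_root P_step v; have /iter_findex := reach_root v.
move: (findex parent v root) => n; elim: n v => [|n IHn] v; first by move=> /= ->.
rewrite iterSr => /IHn P_pv.
by case: (eqVneq v root) => [->|v_neq] //; apply: P_step.
Qed.

End RootedTree.

Local Open Scope ring_scope.

Section ConvexHullInPolytope.
Variables (R : realFieldType) (T : finType) (parent : T -> T).

Lemma Zset_anc z v u : Zset parent z -> u \in anc parent v -> ~~ (z v && z u).
Proof. by move=> /forallP /(_ v) /forallP /(_ u) /implyP; apply. Qed.

Lemma Zset_sum_ancb_le1 z v :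
  Zset parent z -> \sum_(u in ancb parent v) ((z u)%:R : R) <= 1.
Proof.
move=> Zz; case: (pickP [pred u in ancb parent v | z u]) => [u /andP[v_u zu] | no_one].
  rewrite (bigD1 u) //= zu big1 ?addr0 // => w /andP[v_w w_neq].
  apply/eqP; rewrite pnatr_eq0 eqb0; apply/negP=> zw.
  rewrite !inE in v_u v_w.
  have [u_w | w_u] := fconnect_total v_u v_w.
    have w_anc_u : w \in anc parent u by rewrite !inE w_neq u_w.
    by have := Zset_anc Zz w_anc_u; rewrite zu zw.
  have u_anc_w : u \in anc parent w by rewrite !inE eq_sym w_neq w_u.
  by have := Zset_anc Zz u_anc_w; rewrite zu zw.
by rewrite big1 ?ler01 // => u v_u; move: (no_one u); rewrite /= v_u => /= ->.
Qed.

Lemma in_conv_Z_polytope (g : T -> R) : in_conv_Z parent g -> in_polytope parent g.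
Proof.
case=> lam [lam_ge0 lam_Z lam_sum1 g_def]; split=> [v|v].
  rewrite g_def sumr_ge0 => [|z _]; last by rewrite mulr_ge0.
  rewrite -[X in _ <= X]lam_sum1 ler_sum // => z _.
  by rewrite ler_piMr //; case: (z v).
under eq_bigr => u _ do rewrite g_def.
rewrite exchange_big /= -[X in _ <= X]lam_sum1 ler_sum // => z _.
rewrite -mulr_sumr; have [Zz | nZz] := boolP (Zset parent z).
  by rewrite ler_piMr // Zset_sum_ancb_le1.
by rewrite lam_Z // mul0r.
Qed.

End ConvexHullInPolytope.

Lemma in_polytope_prod_form (R : realFieldType) (T : finType) (root : T)
    (parent : T -> T) (g : T -> R) :
  parent root = root -> (forall v, fconnect parent v root) ->
  in_polytope parent g -> in_prod_form parent g.
Proof.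
move=> parent_root reach_root [g01 g_sum].
pose D u := 1 - \sum_(w in anc parent u) g w.
have g_le_D u : g u <= D u.
  by rewrite lerBrDr -big_setD1 ?ancb_refl ?g_sum.
have D_ge0 u : 0 <= D u by apply: le_trans (g_le_D u); case/andP: (g01 u).
pose kappa u := if 0 < D u then g u / D u else 0.
have kappaD u : kappa u * D u = g u.
  rewrite /kappa; case: ifPn => [D_gt0 | D_le0]; first by rewrite divfK ?gt_eqF.
  have D0 : D u = 0 by apply/le_anti; rewrite D_ge0 andbT leNgt.
  rewrite mul0r; apply/le_anti; case/andP: (g01 u) => -> _.
  by rewrite /= -D0 g_le_D.
have prod_anc v : \prod_(u in anc parent v) (1 - kappa u) = D v.
  elim/(tree_ind reach_root): v => [|v v_neq IHv].
    by rewrite /D anc_root // !big_set0 subr0.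
  have pv_ancb := ancb_refl parent (parent v).
  rewrite (anc_parent parent_root reach_root v_neq) (big_setD1 _ pv_ancb) /= IHv.
  rewrite mulrBl mul1r kappaD /D (anc_parent parent_root reach_root v_neq).
  by rewrite (big_setD1 _ pv_ancb) opprD addrA addrAC.
exists kappa; split=> [u|v]; last by rewrite prod_anc kappaD.
rewrite /kappa; case: ifPn => [D_gt0|_]; last by rewrite lexx ler01.
case/andP: (g01 u) => g_ge0 _.
by rewrite divr_ge0 ?g_ge0 ?(ltW D_gt0) //= ler_pdivrMr // mul1r g_le_D.
Qed.

Section ProductFormInConvexHull.
Variables (R : realFieldType) (T : finType).

Lemma in_conv_Z_pushforward (parent : T -> T) (I : finType) (w : I -> R)
    (F : I -> {ffun T -> bool}) (g : T -> R) :
  (forall i, 0 <= w i) -> \sum_i w i = 1 -> (forall i, Zset parent (F i)) ->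
  (forall v, g v = \sum_i w i * (F i v)%:R) -> in_conv_Z parent g.
Proof.
move=> w_ge0 w_sum1 FZ g_def.
have split_fibres (G : I -> R) : \sum_i G i = \sum_z \sum_(i | F i == z) G i.
  by rewrite (partition_big F xpredT).
exists (fun z => \sum_(i | F i == z) w i); split.
- by move=> z; rewrite sumr_ge0.
- by move=> z nZz; rewrite big1 // => i /eqP Fi; rewrite -Fi FZ in nZz.
- by rewrite -split_fibres.
move=> v; rewrite g_def split_fibres; apply: eq_bigr => z _.
by rewrite mulr_suml; apply: eq_bigr => i /eqP ->.
Qed.

Definition bernoulli_weight (kappa : T -> R) (b : {ffun T -> bool}) : R :=
  \prod_v (if b v then kappa v else 1 - kappa v).

Lemma bernoulli_weight_ge0 kappa b :
  (forall v, 0 <= kappa v <= 1) -> 0 <= bernoulli_weight kappa b.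
Proof.
move=> kappa01; rewrite prodr_ge0 // => v _.
by case/andP: (kappa01 v) => ? ?; case: (b v); rewrite // subr_ge0.
Qed.

Lemma sum_bernoulli_prod kappa (A : {set T}) (c : T -> bool -> R) :
  \sum_b bernoulli_weight kappa b * \prod_(v in A) c v (b v) =
  \prod_(v in A) (kappa v * c v true + (1 - kappa v) * c v false).
Proof.
rewrite [RHS]big_mkcond /=.
under eq_bigr => b _ do rewrite big_mkcond -big_split /=.
rewrite -(bigA_distr_bigA (fun v (x : bool) =>
  (if x then kappa v else 1 - kappa v) * (if v \in A then c v x else 1))).
apply: eq_bigr => v _; rewrite big_bool /=.
by case: (v \in A); rewrite ?mulr1 // addrC subrK.
Qed.

Lemma bernoulli_weight_sum1 kappa : \sum_b bernoulli_weight kappa b = 1.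
Proof.
have := sum_bernoulli_prod kappa set0 (fun _ _ => 1).
by rewrite !big_set0 => <-; apply: eq_bigr => b _; rewrite mulr1.
Qed.

Lemma prodr_bool (A : {set T}) (P : T -> bool) :
  \prod_(v in A) (P v)%:R = ([forall v in A, P v]%:R : R).
Proof.
have [all_P | /forallPn[v]] := boolP [forall v in A, P v].
  by rewrite big1 // => v v_A; rewrite (implyP (forallP all_P v) v_A).
by rewrite negb_imply => /andP[v_A /negbTE Pv]; rewrite (bigD1 v) //= Pv mul0r.
Qed.

Lemma in_prod_form_conv_Z (parent : T -> T) (g : T -> R) :
  in_prod_form parent g -> in_conv_Z parent g.
Proof.
case=> kappa [kappa01 g_def].
pose keep (b : {ffun T -> bool}) : {ffun T -> bool} :=
  [ffun v => [forall u in ancb parent v, b u == (u == v)]].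
pose c v (u : T) (x : bool) := (x == (u == v))%:R : R.
apply: (in_conv_Z_pushforward (w := bernoulli_weight kappa) (F := keep)).
- by move=> b; apply: bernoulli_weight_ge0.
- exact: bernoulli_weight_sum1.
- move=> b; apply/forallP=> v; apply/forallP=> u; apply/implyP=> v_u.
  rewrite !ffunE; apply/negP=> /andP[/forallP/(_ u) keep_v /forallP/(_ u) keep_u].
  move: v_u; rewrite !inE => /andP[u_neq v_u].
  by move: keep_v keep_u; rewrite !inE v_u connect0 (negbTE u_neq) eqxx /= => /eqP -> /eqP.
move=> v.
under eq_bigr => b _ do rewrite ffunE -(prodr_bool (ancb parent v)).
rewrite (sum_bernoulli_prod kappa (ancb parent v) (c v)).
rewrite (big_setD1 _ (ancb_refl parent v)) g_def /c eqxx /= mulr1 mulr0 addr0.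
congr (_ * _); apply: eq_bigr => u; rewrite !inE => /andP[/negbTE -> _] /=.
by rewrite mulr0 mulr1 add0r.
Qed.

End ProductFormInConvexHull.

Theorem proposition1 (R : realFieldType) (T : finType) (root : T)
    (parent : T -> T) (Htree : is_rooted_tree root parent) (g : T -> R) :
  (in_conv_Z parent g <-> in_prod_form parent g) /\
  (in_prod_form parent g <-> in_polytope parent g).
Proof.
case: Htree => parent_root reach_root.
have poly_prod := in_polytope_prod_form parent_root reach_root (g := g).
have conv_poly := @in_conv_Z_polytope R T parent g.
have prod_conv := @in_prod_form_conv_Z R T parent g.
by split; split; auto.
Qed.
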